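(* Let $\mathcal{G}(\boldsymbol{W},\boldsymbol{U})$ be a hidden variables DAG with discrete finite observed variables satisfying Conditions 1 and 2 below, and let $D_1$ be a district of c-degree 1 with observed variables $\boldsymbol{W}_1$ and $\boldsymbol{W}_2=\mathrm{Pa}_{obs}(\boldsymbol{W}_1)\setminus\boldsymbol{W}_1$. Let the H-representation of the constraints on this district produced by the algorithm below be $H_i\boldsymbol{p}\le b_i$ and $H_e\boldsymbol{p}=b_e$, where $\boldsymbol{p}=[\mathrm{P}^*(\boldsymbol{W}_1=w_1\mid\boldsymbol{W}_2=w_2)]$ over all values $w_1,w_2$. Let $\check{\boldsymbol{P}}$ be the Cartesian product of probability simplices, one for each value $w_2$ of $\boldsymbol{W}_2$ (each simplex consisting of the vectors $(p(w_1,w_2))_{w_1}$ with nonnegative entries summing to 1), ordered consistently with $\boldsymbol{p}$. Then any nontrivial constraint encoded by (a row of) $H_i$ or $H_e$ is violated by at least one extreme point of $\check{\boldsymbol{P}}$.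
   Context: Notation: $\mathrm{Pa}_{obs}$, $\mathrm{An}_{obs}$ (including the vertex itself), $\mathrm{Ch}_{obs}$ denote observed parents, ancestors, children. Condition 1: every unobserved variable has no parents. Condition 2: for each $U_i$, $|\mathrm{Ch}_{obs}(U_i)|\ge 2$ and no other $U_j$ has $\mathrm{Ch}_{obs}(U_i)\subseteq\mathrm{Ch}_{obs}(U_j)$. Districts: delete all edges not originating from unobserved variables; connected sets of observed variables are districts. The c-degree of a district is the maximum of 1 and the number of unobserved parents of its members. $\mathrm{P}^*(\boldsymbol{W}_1=w_1\mid\boldsymbol{W}_2=w_2)=\prod_i\mathrm{P}(W_{1i}=w_{1i}\mid\{\mathrm{Pa}_{obs}(\boldsymbol{W}_1)\cap\mathrm{An}_{obs}(W_{1i})\}\setminus W_{1i})$. Response variables: each observed $W_i$ has a latent $R_{W_i}$ indexing all functions from the domain of $\mathrm{Pa}_{obs}(W_i)$ to that of $W_i$, determining $W_i$. Algorithm for the district: with $\mathcal{B}(w_1,w_2)$ the set of values $b$ of $\boldsymbol{R}_{\boldsymbol{W}_1}$ that, given $\boldsymbol{W}_2=w_2$, recursively produce $\boldsymbol{W}_1=w_1$, form the 0/1 matrix $\boldsymbol{B}$ with $\boldsymbol{p}=\boldsymbol{B}\boldsymbol{r}$, $\boldsymbol{r}$ the vector of response-variable probabilities (nonnegative, summing to 1), and convert the polytope $\{\boldsymbol{B}\boldsymbol{r}\}$ to an H-representation $H_i\boldsymbol{p}\le b_i$, $H_e\boldsymbol{p}=b_e$. An observable constraint is nontrivial if it restricts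 the joint distribution beyond the standard probabilistic constraints (probabilities lie in $[0,1]$ and sum to 1), i.e. there is some $\boldsymbol{p}\in\check{\boldsymbol{P}}$ violating it. *)

From HB Require Import structures.
From mathcomp Require Import all_boot all_order all_algebra.
Set Implicit Arguments. Unset Strict Implicit. Unset Printing Implicit Defensive.
Import Order.TTheory GRing.Theory Num.Theory.
Local Open Scope ring_scope.

(* Vertices: observed variables W_i (inl i, i : 'I_n) and unobserved
   variables U_u (inr u, u : 'I_m).  E x y means there is an edge x -> y. *)
Definition vtx (n m : nat) := ('I_n + 'I_m)%type.

Definition acyclic {n m} (E : rel (vtx n m)) : Prop :=
  forall x y, E x y -> ~~ connect E y x.

Definition condition1 {n m} (E : rel (vtx n m)) : Prop :=
  forall (v : vtx n m) (u : 'I_m), ~~ E v (inr u).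

Definition ch_obs {n m} (E : rel (vtx n m)) (u : 'I_m) : {set 'I_n} :=
  [set j | E (inr u) (inl j)].

Definition condition2 {n m} (E : rel (vtx n m)) : Prop :=
  forall u : 'I_m, (2 <= #|ch_obs E u|)%N /\
    (forall u' : 'I_m, u' != u -> ~~ (ch_obs E u \subset ch_obs E u')).

Definition pa_obs {n m} (E : rel (vtx n m)) (i : 'I_n) : {set 'I_n} :=
  [set j | E (inl j) (inl i)].
Definition pa_obs_set {n m} (E : rel (vtx n m)) (S : {set 'I_n}) : {set 'I_n} :=
  [set j | [exists i in S, E (inl j) (inl i)]].

(* Two observed vertices are adjacent in the graph obtained by deleting all
   edges not originating from unobserved variables iff they share an
   unobserved parent; districts are the connected classes of observed
   vertices of that graph. *)
Definition sib {n m} (E : rel (vtx n m)) : rel 'I_n :=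
  fun i j => [exists u : 'I_m, E (inr u) (inl i) && E (inr u) (inl j)].
Definition district {n m} (E : rel (vtx n m)) (S : {set 'I_n}) : Prop :=
  exists i : 'I_n, S = [set j | connect (sib E) i j].

Definition upa_set {n m} (E : rel (vtx n m)) (S : {set 'I_n}) : {set 'I_m} :=
  [set u | [exists i in S, E (inr u) (inl i)]].
Definition cdegree {n m} (E : rel (vtx n m)) (S : {set 'I_n}) : nat :=
  maxn 1 #|upa_set E S|.

Definition W2of {n m} (E : rel (vtx n m)) (W1 : {set 'I_n}) : {set 'I_n} :=
  pa_obs_set E W1 :\: W1.

(* dom i is the (finite) state space of W_i.  A value of the set S of
   observed variables is an assignment defined exactly on S. *)
Definition asg {n} (dom : 'I_n -> finType) (S : {set 'I_n}) :=
  {x : {dffun forall i : 'I_n, option (dom i)} | [forall i, (x i != None) == (i \in S)]}.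

(* Response variable R_{W_i}: all functions from the values of Pa_obs(W_i)
   to the values of W_i. Joint response variable of the district W1. *)
Definition resp {n m} (E : rel (vtx n m)) (dom : 'I_n -> finType) (i : 'I_n) :=
  {ffun asg dom (pa_obs E i) -> dom i}.
Definition resp_profile {n m} (E : rel (vtx n m)) (dom : 'I_n -> finType)
    (W1 : {set 'I_n}) :=
  {dffun forall i : {i : 'I_n | i \in W1}, resp E dom (val i)}.

Definition merge {n} (dom : 'I_n -> finType) (S1 S2 : {set 'I_n})
    (w1 : asg dom S1) (w2 : asg dom S2) (j : 'I_n) : option (dom j) :=
  if val w1 j is Some v then Some v else val w2 j.

(* b, given W2 = w2, produces W1 = w1: all structural equations
   W_i = b_i(Pa_obs(W_i)), i in W1, hold for the joint value (w1, w2).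
   (By acyclicity this is the unique recursively produced value.) *)
Definition produces {n m} (E : rel (vtx n m)) (dom : 'I_n -> finType)
    (W1 : {set 'I_n}) (b : resp_profile E dom W1)
    (w2 : asg dom (W2of E W1)) (w1 : asg dom W1) : bool :=
  [forall i : {i : 'I_n | i \in W1}, forall a : asg dom (pa_obs E (val i)),
     [forall j in pa_obs E (val i), val a j == merge w1 w2 j] ==>
     (Some (b i a) == val w1 (val i))].

Definition pidx {n m} (E : rel (vtx n m)) (dom : 'I_n -> finType) (W1 : {set 'I_n}) :=
  (asg dom W1 * asg dom (W2of E W1))%type.

(* The polytope { B r : r a probability vector on the values of R_{W1} }. *)
Definition Bpolytope {R : realFieldType} {n m} (E : rel (vtx n m))
    (dom : 'I_n -> finType) (W1 : {set 'I_n}) (p : {ffun pidx E dom W1 -> R}) : Prop :=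
  exists r : {ffun resp_profile E dom W1 -> R},
    [/\ forall b, 0 <= r b, \sum_b r b = 1 &
        forall w1 w2, p (w1, w2) = \sum_b (produces b w2 w1)%:R * r b].

Definition Pcheck {R : realFieldType} {n m} (E : rel (vtx n m))
    (dom : 'I_n -> finType) (W1 : {set 'I_n}) (p : {ffun pidx E dom W1 -> R}) : Prop :=
  (forall x, 0 <= p x) /\ (forall w2, \sum_(w1 : asg dom W1) p (w1, w2) = 1).

Definition extreme_point {R : realFieldType} {I : finType}
    (S : {ffun I -> R} -> Prop) (x : {ffun I -> R}) : Prop :=
  S x /\ forall (y z : {ffun I -> R}) (t : R), S y -> S z -> 0 < t < 1 ->
    (forall a, x a = t * y a + (1 - t) * z a) -> y = z.

Definition dotp {R : realFieldType} {I : finType} (h p : {ffun I -> R}) : R :=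
  \sum_x h x * p x.

Arguments Bpolytope {R n m} E dom W1 p.
Arguments Pcheck {R n m} E dom W1 p.
Arguments pidx {n m} E dom W1.
Arguments produces {n m} E dom W1 b w2 w1.
Arguments extreme_point {R I} S x.
Arguments dotp {R I} h p.

(* The set P-check is a product of simplices, one for each value w2, and a
   linear functional p |-> sum h(w1, w2) p(w1, w2) separates over w2.  It is
   therefore maximised by the deterministic point that puts, for every w2, all
   mass on a w1 maximising h(., w2); such points are extreme.  Hence if some
   p in P-check violates [h p <= b], so does an extreme point, and a violated
   equality [h p = b] is a violated inequality for h or for -h. *)

From HB Require Import structures.
From mathcomp Require Import all_boot all_order all_algebra.
Set Implicit Arguments.
Unset Strict Implicit.
Unset Printing Implicit Defensive.

Import Order.TTheory GRing.Theory Num.Theory.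
Local Open Scope ring_scope.

Section ProductOfSimplices.

Variables (R : realFieldType) (A B : finType).

Definition prod_simplex (p : {ffun A * B -> R}) : Prop :=
  (forall x, 0 <= p x) /\ (forall b, \sum_a p (a, b) = 1).

Lemma dotp_pair (h p : {ffun A * B -> R}) :
  dotp h p = \sum_b \sum_a h (a, b) * p (a, b).
Proof. by rewrite /dotp exchange_big pair_big /=; apply: eq_bigr => -[]. Qed.

Lemma dotpN (h p : {ffun A * B -> R}) :
  dotp [ffun x => - h x] p = - dotp h p.
Proof. by rewrite /dotp -sumrN; apply: eq_bigr => x _; rewrite ffunE mulNr. Qed.

Definition deterministic (f : B -> A) : {ffun A * B -> R} :=
  [ffun x => (x.1 == f x.2)%:R].

Lemma sum_deterministic (f : B -> A) (c : A -> R) b :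
  \sum_a c a * deterministic f (a, b) = c (f b).
Proof.
rewrite (bigD1 (f b)) //= ffunE eqxx mulr1 big1 ?addr0 // => a /negbTE fa.
by rewrite ffunE /= fa mulr0.
Qed.

Lemma deterministic_prod_simplex f : prod_simplex (deterministic f).
Proof.
split=> [x|b]; first by rewrite ffunE ler0n.
rewrite -(sum_deterministic f (fun=> 1) b).
by apply: eq_bigr => a _; rewrite mul1r.
Qed.

Lemma dotp_deterministic h f : dotp h (deterministic f) = \sum_b h (f b, b).
Proof.
rewrite dotp_pair; apply: eq_bigr => b _.
exact: (sum_deterministic f (fun a => h (a, b))).
Qed.

(* Off the graph of f, a vanishing sum of two nonnegative terms forces y to
   vanish; the column sums of y then pin it down on the graph. *)
Lemma deterministic_convex_combination f (y z : {ffun A * B -> R}) t :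
  prod_simplex y -> prod_simplex z -> 0 < t < 1 ->
  (forall x, deterministic f x = t * y x + (1 - t) * z x) ->
  y = deterministic f.
Proof.
move=> [y_ge0 y_sum] [z_ge0 _] /andP[t_gt0 t_lt1] yz.
have y_off a b : a != f b -> y (a, b) = 0.
  move=> /negbTE fa; move/esym/eqP: (yz (a, b)); rewrite ffunE /= fa.
  rewrite paddr_eq0 ?mulr_ge0 ?subr_ge0 ?(ltW t_gt0) ?(ltW t_lt1) //.
  by rewrite mulf_eq0 (gt_eqF t_gt0) => /andP[/eqP].
apply/ffunP => -[a b]; rewrite ffunE /=.
have [->|fa] := eqVneq a (f b); last by rewrite y_off.
by rewrite -(y_sum b) (bigD1 (f b)) //= big1 ?addr0 // => a' /y_off.
Qed.

Lemma deterministic_extreme f : extreme_point prod_simplex (deterministic f).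
Proof.
split=> [|y z t Py Pz /andP[t_gt0 t_lt1] yz].
  exact: deterministic_prod_simplex.
have zy x : deterministic f x = (1 - t) * z x + (1 - (1 - t)) * y x.
  by rewrite yz subKr addrC.
rewrite (deterministic_convex_combination Py Pz _ yz) ?t_gt0 //.
rewrite (deterministic_convex_combination Pz Py _ zy) //.
by rewrite subr_gt0 t_lt1 ltrBlDr ltrDl t_gt0.
Qed.

Lemma prod_simplex_extreme_ge (h p : {ffun A * B -> R}) :
  prod_simplex p ->
  exists2 q, extreme_point prod_simplex q & dotp h p <= dotp h q.
Proof.
move=> [p_ge0 p_sum].
have [a0 _ | A0] := pickP (@predT A); last first.
  exists p => //; split=> [//|y z t _ _ _ _].
  by apply/ffunP => -[a b]; have := A0 a.
pose f b := [arg max_(a > a0) h (a, b)]%O.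
have f_max a b : h (a, b) <= h (f b, b).
  by rewrite /f; case: arg_maxP => // a' _; apply.
exists (deterministic f); first exact: deterministic_extreme.
rewrite dotp_pair dotp_deterministic; apply: ler_sum => b _.
rewrite -[h (f b, b)]mulr1 -(p_sum b) mulr_sumr.
by apply: ler_sum => a _; rewrite ler_wpM2r.
Qed.

Lemma prod_simplex_extreme_le (h p : {ffun A * B -> R}) :
  prod_simplex p ->
  exists2 q, extreme_point prod_simplex q & dotp h q <= dotp h p.
Proof.
move=> /(prod_simplex_extreme_ge [ffun x => - h x])[q Eq].
by rewrite !dotpN lerN2; exists q.
Qed.

End ProductOfSimplices.

Theorem proposition4 (R : realFieldType) (n m : nat) (E : rel (vtx n m))
    (dom : 'I_n -> finType) (W1 : {set 'I_n})
    (ki ke : nat) (Hi : 'I_ki -> {ffun pidx E dom W1 -> R}) (bi : 'I_ki -> R)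
    (He : 'I_ke -> {ffun pidx E dom W1 -> R}) (be : 'I_ke -> R) :
  acyclic E -> condition1 E -> condition2 E ->
  (forall i : 'I_n, (0 < #|dom i|)%N) ->
  district E W1 -> cdegree E W1 = 1%N ->
  (forall p : {ffun pidx E dom W1 -> R},
     Bpolytope E dom W1 p <->
     ((forall k, dotp (Hi k) p <= bi k) /\ (forall k, dotp (He k) p = be k))) ->
  (forall k : 'I_ki,
     (exists p, Pcheck E dom W1 p /\ bi k < dotp (Hi k) p) ->
     exists q, extreme_point (Pcheck E dom W1) q /\ bi k < dotp (Hi k) q) /\
  (forall k : 'I_ke,
     (exists p, Pcheck E dom W1 p /\ dotp (He k) p != be k) ->
     exists q, extreme_point (Pcheck E dom W1) q /\ dotp (He k) q != be k).
Proof.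
move=> _ _ _ _ _ _ _; split=> k [p [Pp violated]].
  have [q Eq ge] := prod_simplex_extreme_ge (Hi k) Pp.
  by exists q; split; last exact: lt_le_trans ge.
case: ltgtP violated => // [lt | gt] _.
  have [q Eq le] := prod_simplex_extreme_le (He k) Pp.
  by exists q; split; last by rewrite lt_eqF // (le_lt_trans le lt).
have [q Eq ge] := prod_simplex_extreme_ge (He k) Pp.
by exists q; split; last by rewrite gt_eqF // (lt_le_trans gt ge).
Qed.
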